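(* Let $A$ be a finite alphabet, $n\ge1$, and $L\subseteq (A^\ast)^n$ an $n$-variable language. The following are equivalent: (i) $L$ is the accepted language of an FAA; (ii) $L$ is the accepted language of a DFAA; (iii) $L$ is the accepted language of an SAA.
   Context: $A^\ast$ is the set of finite words over $A$, $[n]=\{1,\ldots,n\}$, $\$$ a new symbol, and $A^\$=(A\sqcup\{\$\})^n\setminus\{(\$,\ldots,\$)\}$ the padded alphabet. Let $E=P(P([n])\setminus\{\emptyset\})$ (sets of filters; a filter is a nonempty subset of $[n]$). An FAA (non-deterministic filter asynchronous automaton) is a quadruple $(S,S_0,\Delta,S_f)$ with $S$ a finite set of states, $S_0\subseteq S$ initial states, $S_f\subseteq S$ accept states, and $\Delta:S\times A^\$\to P(S)\times E$, such that for all $\overline\sigma=(\sigma_1,\ldots,\sigma_n)\in A^\$$ and $s\in S$, if $\sigma_i=\$$ and the set of next states of $\Delta(s,\overline\sigma)$ is nonempty, then $i$ lies in none of the filters of $\Delta(s,\overline\sigma)$. It accepts $(w_1,\ldots,w_n)$ as follows: the words are written on $n$ tapes with a head on each; the symbol under head $i$ is the next unread letter of $w_i$, or $\$$ if $w_i$ is fully read. Starting in a state of $S_0$, at a state $s$ with current symbol tuple $\overline\sigma$, if $\Delta(s,\overline\sigma)=(T,X)$ one may choose a filter $\chi\in X$ and a state $t\in T$, advance the heads with index in $\chi$ by one position, and move to $t$. The tuple is accepted if some such run reads all tapes completely and ends in a state of $S_f$. A DFAA is an FAA in which $|X|\le1$ whenever $\Delta(s,\overline\sigma)=(T,X)$.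 An SAA (non-deterministic semi-sorted asynchronous automaton) is a non-deterministic finite state automaton over $A\sqcup\{\$\}$ (possibly several start states and $\epsilon$-transitions) with a partition of its states into $S_1,\ldots,S_n$; it accepts $(w_1,\ldots,w_n)$ iff there is a path from a start state to an accept state reading a shuffle of $(w_1\$,\ldots,w_n\$)$ (an ordering of all letters respecting the order in each word), where a transition out of a state in $S_i$ reads the next letter of tape $i$. *)

From mathcomp Require Import all_boot.
Set Implicit Arguments.
Unset Strict Implicit.
Unset Printing Implicit Defensive.

Inductive star (T : Type) (R : T -> T -> Prop) : T -> T -> Prop :=
| star_refl x : star R x x
| star_step x y z : R x y -> star R y z -> star R x z.

Section Automata.
Variables (A : finType) (n : nat).

Definition words := 'I_n -> seq A.

(* Symbol tuples over A ⊔ {$}; [None] encodes the padding symbol $. *)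
Definition symtuple := {ffun 'I_n -> option A}.
Definition all_dollar (sg : symtuple) : bool := [forall i, sg i == None].

Definition conf (S : Type) := (S * ('I_n -> nat))%type.

(* delta is only relevant on A^$ (non all-$ tuples); its value on the
   all-$ tuple is never used. *)
Record faa (S : finType) := FAA {
  faa_start : {set S};
  faa_final : {set S};
  faa_delta : S -> symtuple -> {set S} * {set {set 'I_n}} }.

Definition faa_wf (S : finType) (M : faa S) : Prop :=
  forall s (sg : symtuple), ~~ all_dollar sg ->
    set0 \notin (faa_delta M s sg).2 /\
    (forall i, sg i = None -> (faa_delta M s sg).1 != set0 ->
       forall chi, chi \in (faa_delta M s sg).2 -> i \notin chi).

Definition dfaa_wf (S : finType) (M : faa S) : Prop :=
  faa_wf M /\
  forall s (sg : symtuple), ~~ all_dollar sg -> #|(faa_delta M s sg).2| <= 1.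

(* Symbol under each head: next unread letter, or $ if the word is read. *)
Definition cur_sym (w : words) (p : 'I_n -> nat) : symtuple :=
  [ffun i => onth (w i) (p i)].

Definition faa_step (S : finType) (M : faa S) (w : words) (c c' : conf S) : Prop :=
  let sg := cur_sym w c.2 in
  ~~ all_dollar sg /\
  exists chi, chi \in (faa_delta M c.1 sg).2 /\ c'.1 \in (faa_delta M c.1 sg).1 /\
    c'.2 = (fun i => c.2 i + (i \in chi)).

Definition faa_accepts (S : finType) (M : faa S) (w : words) : Prop :=
  exists s0 sf p, s0 \in faa_start M /\ sf \in faa_final M /\
    star (faa_step M w) (s0, fun _ => 0) (sf, p) /\
    (forall i, p i = size (w i)).

(* An NFA over A ⊔ {$} with epsilon-transitions: labels are
   [None] = epsilon, [Some None] = $, [Some (Some a)] = a.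
   [saa_part s = i] means s belongs to the block S_i of the partition. *)
Record saa (S : finType) := SAA {
  saa_start : {set S};
  saa_final : {set S};
  saa_part : S -> 'I_n;
  saa_trans : S -> option (option A) -> {set S} }.

Definition padded (u : seq A) : seq (option A) := rcons (map Some u) None.

Definition saa_step (S : finType) (M : saa S) (w : words) (c c' : conf S) : Prop :=
  (c'.1 \in saa_trans M c.1 None /\ c'.2 = c.2) \/
  (exists x, onth (padded (w (saa_part M c.1))) (c.2 (saa_part M c.1)) = Some x /\
     c'.1 \in saa_trans M c.1 (Some x) /\
     c'.2 = (fun i => c.2 i + (i == saa_part M c.1))).

Definition saa_accepts (S : finType) (M : saa S) (w : words) : Prop :=
  exists s0 sf p, s0 \in saa_start M /\ sf \in saa_final M /\
    star (saa_step M w) (s0, fun _ => 0) (sf, p) /\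
    (forall i, p i = size (padded (w i))).

End Automata.

(* An FAA is determinized by guessing, one move ahead, the filter it will use
   next and storing that guess in the state.  An SAA is simulated by an FAA
   whose state remembers the tape k of the next letter to be read: one move
   of the FAA closes the current SAA state under epsilon-moves and reads of $
   on exhausted tapes (a finite reachability problem, since the set of tapes
   whose $ has been read is finite), then reads the letter of tape k.
   Conversely an SAA simulates an FAA by reading the symbol under every head
   into a finite buffer, one tape at a time, and performing the move of the
   FAA by an epsilon-move once the buffer is full; the tapes of the chosen
   filter are then emptied, the others keep their symbol. *)

From mathcomp Require Import all_boot zify.
From Stdlib Require Import FunctionalExtensionality.
Set Implicit Arguments.
Unset Strict Implicit.
Unset Printing Implicit Defensive.

Section Star.
Variables (T : Type) (R : T -> T -> Prop).

Lemma star_trans x y z : star R x y -> star R y z -> star R x z.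
Proof. by elim=> [//|a b c Rab _ IH] /IH; apply: star_step. Qed.

Lemma star1 x y : R x y -> star R x y.
Proof. by move=> Rxy; apply: star_step Rxy (star_refl _ _). Qed.

End Star.

Lemma star_simulation T1 T2 (R1 : T1 -> T1 -> Prop) (R2 : T2 -> T2 -> Prop)
    (sim : T1 -> T2 -> Prop) :
  (forall x y x', sim x x' -> R1 x y -> exists2 y', sim y y' & star R2 x' y') ->
  forall x y x', star R1 x y -> sim x x' -> exists2 y', sim y y' & star R2 x' y'.
Proof.
move=> simR x y x' R1xy; elim: R1xy x' => [a|a b c Rab _ IH] a' sim_a.
  by exists a'; [|apply: star_refl].
have [b' sim_b R2ab] := simR _ _ _ sim_a Rab; have [c' sim_c R2bc] := IH _ sim_b.
by exists c'; [|apply: star_trans R2ab R2bc].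
Qed.

Lemma connect_starP (T : finType) (e : rel T) x y :
  reflect (star (fun a b => e a b) x y) (connect e x y).
Proof.
apply: (iffP idP) => [/connectP [p]|]; last first.
  elim=> [a|a b c eab _ IH]; first exact: connect0.
  exact: connect_trans (connect1 eab) IH.
elim: p x => [|z p IH] x /=; first by move=> _ ->; apply: star_refl.
by case/andP=> exz pz ez; apply: star_step exz (IH _ pz ez).
Qed.

Lemma onth_padded (A : finType) (u : seq A) m :
  onth (padded u) m = if m <= size u then Some (onth u m) else None.
Proof. by elim: u m => [|a u IH] [|m] //=; rewrite ?IH ?onth0n. Qed.

Lemma size_padded (A : finType) (u : seq A) : size (padded u) = (size u).+1.
Proof. by rewrite size_rcons size_map. Qed.

Definition dollars {A : finType} {n : nat} : symtuple A n := [ffun _ => None].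

Section Symbols.
Variables (A : finType) (n : nat) (w : words A n).

Lemma cur_symE q i : cur_sym w q i = onth (w i) (q i).
Proof. exact: ffunE. Qed.

Lemma cur_sym_letter q i a : cur_sym w q i = Some a -> q i < size (w i).
Proof. by rewrite cur_symE -onthTE => ->. Qed.

Lemma cur_sym_dollar q i : cur_sym w q i = None -> size (w i) <= q i.
Proof. by rewrite cur_symE -onthNE => ->. Qed.

Lemma cur_sym_read_all : cur_sym w (fun i => size (w i)) = dollars.
Proof. by apply/ffunP => i; rewrite cur_symE ffunE onth_default. Qed.

End Symbols.

Section Determinization.
Variables (A : finType) (n : nat) (S : finType) (M : faa A n S).

(* The second component is the filter the automaton will use in its next move. *)
Definition det_faa : faa A n (S * {set 'I_n})%type :=
  FAA [set x | x.1 \in faa_start M] [set x | x.1 \in faa_final M]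
   (fun x sg => if x.2 \in (faa_delta M x.1 sg).2
                then ([set y | y.1 \in (faa_delta M x.1 sg).1], [set x.2])
                else (set0, set0)).

Lemma det_faa_wf : faa_wf M -> dfaa_wf det_faa.
Proof.
move=> wfM; split=> x sg nd /=; case: ifP => chi_in; rewrite ?cards1 ?cards0 //.
- have [chi_n0 chi_ok] := wfM x.1 sg nd; split.
    by rewrite in_set1; apply: contraNneq chi_n0 => ->.
  move=> i sg_i /set0Pn [y]; rewrite inE => y_next chi; rewrite in_set1 => /eqP ->.
  by apply: chi_ok => //; apply/set0Pn; exists y.1.
- by split=> [|i _ _ chi]; rewrite in_set0.
Qed.

Lemma det_faa_lift w c c' : star (faa_step M w) c c' ->
  exists chi, star (faa_step det_faa w) ((c.1, chi), c.2) ((c'.1, set0), c'.2).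
Proof.
elim=> [x|x y z [nd [chi [chi_in [y_next y_heads]]]] _ [chi' run]].
  by exists set0; apply: star_refl.
exists chi; apply: star_step run; split=> //=.
by exists chi; rewrite /= chi_in !inE.
Qed.

Lemma det_faa_accepts w : faa_accepts det_faa w <-> faa_accepts M w.
Proof.
split=> [[s0 [sf [p [s0_start [sf_final [run p_end]]]]]]|].
  have sim_step x y x' : x' = (x.1.1, x.2) -> faa_step det_faa w x y ->
      exists2 y', y' = (y.1.1, y.2) & star (faa_step M w) x' y'.
    move=> -> [nd [chi]] /=; case: ifP => [chi_in|_]; last by rewrite in_set0; case.
    rewrite !inE => -[/eqP -> [y_next y_heads]].
    by exists (y.1.1, y.2) => //; apply: star1; split=> //; exists x.1.2.
  have [_ -> run'] := star_simulation sim_step run erefl.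
  by move: s0_start sf_final; rewrite !inE; exists s0.1, sf.1, p.
move=> [s0 [sf [p [s0_start [sf_final [run p_end]]]]]].
have [chi run'] := det_faa_lift run.
by exists (s0, chi), (sf, set0), p; rewrite !inE.
Qed.

End Determinization.

Definition advance n (p : 'I_n -> nat) (k : 'I_n) : 'I_n -> nat :=
  fun i => p i + (i == k).

Lemma advance_set1 n (p : 'I_n -> nat) k :
  (fun i => p i + (i \in [set k])) = advance p k.
Proof. by apply: functional_extensionality => i; rewrite in_set1. Qed.

Section SAAtoFAA.
Variables (A : finType) (n : nat) (S : finType) (M : saa A n S).
Implicit Types (sg : symtuple A n) (D : {set 'I_n}) (q p : 'I_n -> nat).

(* The moves of [M] that the simulating FAA performs without moving a head:
   epsilon-moves, and reads of $ on tapes that [sg] shows to be exhausted.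
   The second component collects the tapes whose $ has been read. *)
Definition silent_step sg : rel (S * {set 'I_n}) := fun x y =>
  let k := saa_part M x.1 in
  ((y.1 \in saa_trans M x.1 None) && (y.2 == x.2)) ||
  [&& k \notin x.2, sg k == None, y.1 \in saa_trans M x.1 (Some None)
    & y.2 == k |: x.2].

Definition silent sg := connect (silent_step sg).

(* In state ((x, D), k) the FAA closes x under silent moves, then reads the
   letter of tape k and guesses the tape of its next letter. *)
Definition faa_of_saa : faa A n ((S * {set 'I_n}) * 'I_n)%type :=
  FAA [set x | (x.1.1 \in saa_start M) && (x.1.2 == set0)]
      [set x | [exists sf in saa_final M, silent dollars x.1 (sf, setT)]]
      (fun x sg => if sg x.2 is Some a then
         ([set y | [exists z, [&& silent sg x.1 z, saa_part M z.1 == x.2,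
                     y.1.1 \in saa_trans M z.1 (Some (Some a)) & y.1.2 == z.2]]],
          [set [set x.2]])
       else (set0, set0)).

Lemma faa_of_saa_wf : faa_wf faa_of_saa.
Proof.
move=> x sg nd /=; case sg_k: (sg x.2) => [a|]; last first.
  by split=> [|i _ _ chi]; rewrite in_set0.
split; first by rewrite in_set1 eq_sym; apply/set0Pn; exists x.2; rewrite inE.
move=> i sg_i _ chi; rewrite in_set1 => /eqP ->; rewrite in_set1.
by apply/eqP => e; move: sg_i; rewrite e sg_k.
Qed.

Variable w : words A n.
Notation sz i := (size (w i)).

(* The heads [p] of [M] are the heads [q] of the FAA, moved past the $ of
   every tape in [D]. *)
Definition dollar_shift q D p :=
  forall i, q i <= sz i /\ p i = q i + (i \in D) /\ (i \in D -> q i = sz i).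

Lemma dollar_shift0 : dollar_shift (fun _ => 0) set0 (fun _ => 0).
Proof. by move=> i; rewrite in_set0. Qed.

Lemma dollar_shift_padded q D p k : dollar_shift q D p ->
  onth (padded (w k)) (p k) = if k \in D then None else Some (cur_sym w q k).
Proof.
move=> /(_ k) [q_k [-> D_k]]; rewrite onth_padded cur_symE.
by case: (boolP (k \in D)) => [/D_k ->|_]; rewrite ?addn1 ?ltnn ?addn0 ?q_k.
Qed.

Lemma dollar_shift_letter q D p k : dollar_shift q D p -> q k < sz k ->
  dollar_shift (advance q k) D (advance p k).
Proof.
move=> shift q_k i; rewrite /advance.
case: (eqVneq i k) => [->|_]; last by rewrite !addn0; apply: shift.
have [_ [-> D_k]] := shift k.
by case: (boolP (k \in D)) => [/D_k|_]; lia.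
Qed.

Lemma dollar_shift_dollar q D p k : dollar_shift q D p -> k \notin D -> q k = sz k ->
  dollar_shift q (k |: D) (advance p k).
Proof.
move=> shift k_new q_k i; rewrite /advance in_setU1.
case: (eqVneq i k) => [->|_] /=; last by rewrite addn0; apply: shift.
by have [_ [-> _]] := shift k; rewrite (negbTE k_new); lia.
Qed.

Lemma dollar_shift_end q D : dollar_shift q D (fun i => (sz i).+1) ->
  q = (fun i => sz i) /\ D = setT.
Proof.
move=> shift; have in_D i : i \in D.
  by have [q_i [p_i _]] := shift i; apply: contraTT q_i => /negbTE D_i; lia.
split; last by apply/setP => i; rewrite in_D inE.
by apply: functional_extensionality => i; have [_ [_ ->]] := shift i.
Qed.

Lemma silent_run sg x z q p : silent sg x z -> sg = cur_sym w q ->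
  dollar_shift q x.2 p ->
  exists2 p', star (saa_step M w) (x.1, p) (z.1, p') & dollar_shift q z.2 p'.
Proof.
move=> /connect_starP run sg_q; subst sg.
elim: run p => {x z} [x|x y z step _ IH] p shift.
  by exists p => //; apply: star_refl.
case/orP: step => [/andP [y_eps /eqP y_D]|/and4P [k_new /eqP k_end y_dollar /eqP y_D]].
  have [p' run shift'] := IH p (ltac:(by rewrite y_D)).
  by exists p' => //; apply: star_step run; left.
set k := saa_part M x.1 in k_new k_end y_dollar y_D.
have q_k : q k = sz k.
  by have [q_le _] := shift k; have := cur_sym_dollar k_end; lia.
have shift_y : dollar_shift q y.2 (advance p k).
  by rewrite y_D; apply: dollar_shift_dollar.
have [p' run shift'] := IH _ shift_y.
exists p' => //; apply: star_step run; right; exists None.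
by rewrite (dollar_shift_padded k shift) (negbTE k_new) k_end.
Qed.

Lemma faa_of_saa_step_sound x y x' :
  x'.1 = x.1.1.1 /\ dollar_shift x.2 x.1.1.2 x'.2 ->
  faa_step faa_of_saa w x y ->
  exists2 y', y'.1 = y.1.1.1 /\ dollar_shift y.2 y.1.1.2 y'.2
    & star (saa_step M w) x' y'.
Proof.
case: x => [[x k] q]; case: y => [[y j] q']; case: x' => [s p] /= [-> shift].
move=> [_ [chi]] /=; case sg_k: (cur_sym w q k) => [a|]; last by rewrite in_set0; case.
rewrite !inE => -[/eqP -> [/existsP [z /and4P [x_z /eqP z_k z_a /eqP y_D]] ->]].
rewrite /= in z_a y_D; have [p' run shift'] := silent_run x_z erefl shift.
have q_k := cur_sym_letter sg_k.
have k_new : k \notin z.2.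
  by apply: contraTN q_k => /(shift' k).2.2 ->; rewrite ltnn.
exists (y.1, advance p' k) => /=.
  by rewrite (advance_set1 q k) y_D; split=> //; apply: dollar_shift_letter.
apply: star_trans run (star1 _); right; exists (Some a); rewrite z_k.
by rewrite (dollar_shift_padded k shift') (negbTE k_new) sg_k.
Qed.

Lemma faa_of_saa_sound : faa_accepts faa_of_saa w -> saa_accepts M w.
Proof.
move=> [[[s0 D0] k0] [xf [q [x0_start [xf_final [run q_end]]]]]].
move: x0_start; rewrite inE /= => /andP [s0_start /eqP D0_empty].
have shift0 : dollar_shift (fun _ => 0) D0 (fun _ => 0).
  by rewrite D0_empty; apply: dollar_shift0.
have [[s p] [/= s_xf shift] run'] :=
  star_simulation faa_of_saa_step_sound (x' := (s0, _)) run (conj erefl shift0).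
move: xf_final; rewrite inE => /exists_inP [sf sf_final xf_sf].
have q_all : q = fun i => sz i by apply: functional_extensionality.
rewrite q_all in shift.
have [p' run'' shift''] := silent_run xf_sf (esym (cur_sym_read_all w)) shift.
exists s0, sf, p'; do 3 split => //; first by apply: star_trans run' _; rewrite s_xf.
by move=> i; have [_ [-> _]] := shift'' i; rewrite inE size_padded addn1.
Qed.

Lemma faa_of_saa_letter_step x z k j q a y :
  silent (cur_sym w q) x z -> saa_part M z.1 = k -> cur_sym w q k = Some a ->
  y \in saa_trans M z.1 (Some (Some a)) ->
  faa_step faa_of_saa w ((x, k), q) (((y, z.2), j), advance q k).
Proof.
move=> x_z z_k sg_k z_a; split=> /=.
  by apply/forallP => /(_ k); rewrite sg_k.
exists [set k]; rewrite sg_k (advance_set1 q k) !inE eqxx; split=> //; split=> //.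
by apply/existsP; exists z; rewrite x_z z_k eqxx z_a eqxx.
Qed.

Hypothesis n_gt0 : 0 < n.

Lemma faa_of_saa_complete_run c c' : star (saa_step M w) c c' ->
  c'.1 \in saa_final M -> c'.2 = (fun i => (sz i).+1) ->
  forall q D x, dollar_shift q D c.2 -> silent (cur_sym w q) x (c.1, D) ->
  exists k, exists2 y, y \in faa_final faa_of_saa &
    star (faa_step faa_of_saa w) ((x, k), q) (y, fun i => sz i).
Proof.
move=> run; elim: run => {c c'} [c|c d e step _ IH] e_final e_end q D x shift x_c.
  have [q_end D_all] := dollar_shift_end (ltac:(by rewrite -e_end)).
  exists (Ordinal n_gt0), (x, Ordinal n_gt0); last by rewrite q_end; apply: star_refl.
  rewrite inE; apply/exists_inP; exists c.1 => //.
  by rewrite -D_all -(cur_sym_read_all w) -q_end.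
case: step => [[d_eps d_heads]|[l [c_l [d_l d_heads]]]].
  apply: IH => //; first by rewrite d_heads.
  by apply: connect_trans x_c (connect1 _); rewrite /silent_step /= d_eps eqxx.
set k := saa_part M c.1 in c_l d_l d_heads.
move: c_l; rewrite (dollar_shift_padded k shift); case: ifP => // k_new [l_k].
move/negbT: k_new => k_new; rewrite d_heads in IH.
case: l l_k d_l => [a|] sg_k d_a.
  have q_k := cur_sym_letter sg_k.
  have [j [y y_final run]] := IH e_final e_end _ _ (d.1, D)
    (dollar_shift_letter shift q_k) (connect0 _ _).
  exists k, y => //; apply: star_step run.
  exact: faa_of_saa_letter_step x_c erefl sg_k d_a.
have q_k : q k = sz k.
  by have [q_le _] := shift k; have := cur_sym_dollar sg_k; lia.
apply: IH (dollar_shift_dollar shift k_new q_k) _ => //.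
apply: connect_trans x_c (connect1 _).
by rewrite /silent_step /= k_new sg_k d_a !eqxx orbT.
Qed.

Lemma faa_of_saa_complete : saa_accepts M w -> faa_accepts faa_of_saa w.
Proof.
move=> [s0 [sf [p [s0_start [sf_final [run p_end]]]]]].
have p_all : p = fun i => (sz i).+1.
  by apply: functional_extensionality => i; rewrite p_end size_padded.
have [k [y y_final run']] :=
  faa_of_saa_complete_run run sf_final p_all dollar_shift0 (connect0 _ (s0, set0)).
by exists ((s0, set0), k), y, (fun i => sz i); rewrite inE /= s0_start eqxx.
Qed.

Lemma faa_of_saa_accepts : faa_accepts faa_of_saa w <-> saa_accepts M w.
Proof. by split; [apply: faa_of_saa_sound | apply: faa_of_saa_complete]. Qed.

End SAAtoFAA.

Section FAAtoSAA.
Variables (A : finType) (n : nat) (S : finType) (M : faa A n S).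

(* A buffer holds, for each tape, the symbol read on it since the last
   simulated move of [M]: [None] if nothing was read yet, [Some None] for $. *)
Local Notation buffer := {ffun 'I_n -> option (option A)}.
Implicit Types (b : buffer) (q p : 'I_n -> nat).

Definition buffer_sym b : symtuple A n := [ffun i => odflt None (b i)].
Definition buffer_full b := [forall i, b i != None].
Definition clear_buffer (chi : {set 'I_n}) b : buffer :=
  [ffun i => if i \in chi then None else b i].
Definition fill_buffer k (l : option A) b : buffer :=
  [ffun i => if i == k then Some l else b i].

Definition simulate_step (x y : S * buffer) : bool :=
  let sg := buffer_sym x.2 in
  [&& buffer_full x.2, ~~ all_dollar sg &
      [exists chi in (faa_delta M x.1 sg).2,
         (y.1 \in (faa_delta M x.1 sg).1) && (y.2 == clear_buffer chi x.2)]].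

(* In state ((s, b), k) the SAA reads a symbol of tape k into the buffer;
   its epsilon-moves switch tapes or, once the buffer is full, perform a move
   of [M]. *)
Definition saa_of_faa : saa A n ((S * buffer) * 'I_n)%type :=
  SAA [set x | (x.1.1 \in faa_start M) && (x.1.2 == [ffun _ => None])]
      [set x | (x.1.1 \in faa_final M) && (x.1.2 == [ffun _ => Some None])]
      (fun x => x.2)
      (fun x o => if o is Some l then
           [set y | (x.1.2 x.2 == None) && (y == (x.1.1, fill_buffer x.2 l x.1.2, x.2))]
         else [set y | (y.1 == x.1) || simulate_step x.1 y.1]).

Variable w : words A n.
Notation sz i := (size (w i)).

Definition buffered q b p := forall i,
  p i = q i + (b i != None) /\ forall l, b i = Some l -> l = cur_sym w q i.

Lemma buffered_empty q : buffered q [ffun _ => None] q.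
Proof. by move=> i; rewrite ffunE addn0. Qed.

Lemma buffered_full q b p : buffer_full b -> buffered q b p ->
  forall i, b i = Some (cur_sym w q i).
Proof.
move=> /forallP b_full buf i; have := b_full i.
by case b_i: (b i) => [l|] // _; have [_ /(_ _ b_i) ->] := buf i.
Qed.

Lemma buffered_fill q b p k : buffered q b p -> b k = None ->
  buffered q (fill_buffer k (cur_sym w q k) b) (advance p k).
Proof.
move=> buf b_k i; rewrite /advance ffunE; have [-> b_i] := buf i.
case: (eqVneq i k) => [->|_]; last by rewrite addn0.
by rewrite b_k /= addn0 addn1; split=> // l [<-].
Qed.

Lemma buffered_clear q b p (chi : {set 'I_n}) :
  (forall i, b i = Some (cur_sym w q i)) -> buffered q b p ->
  buffered (fun i => q i + (i \in chi)) (clear_buffer chi b) p.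
Proof.
move=> b_full buf i; rewrite ffunE; have [-> _] := buf i; rewrite b_full /=.
case: (boolP (i \in chi)) => [_|i_chi]; first by rewrite addn0 addn1.
by rewrite !addn0; split=> // l [<-]; rewrite !cur_symE (negbTE i_chi) addn0.
Qed.

Lemma saa_of_faa_step_sound x y x' :
  x'.1 = x.1.1.1 /\ buffered x'.2 x.1.1.2 x.2 ->
  saa_step saa_of_faa w x y ->
  exists2 y', y'.1 = y.1.1.1 /\ buffered y'.2 y.1.1.2 y.2 & star (faa_step M w) x' y'.
Proof.
case: x => [[[s b] k] p]; case: y => [[[t b'] k'] p']; case: x' => [s' q] /= [-> buf].
case=> [[/= y_eps ->]|[l [/= p_l [y_l ->]]]]; last first.
  exists (s, q) => //; last by apply: star_refl.
  move: y_l; rewrite inE => /andP [/eqP b_k /eqP [-> -> _]]; split=> //.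
  have [p_k _] := buf k; move: p_l; rewrite p_k b_k addn0 onth_padded -cur_symE.
  by case: ifP => // _ [<-]; apply: buffered_fill.
move: y_eps; rewrite inE => /orP [/eqP [-> ->]|/and3P [/= b_full nd]].
  by exists (s, q) => //; apply: star_refl.
case/exists_inP => chi chi_in /andP [t_next /eqP ->].
have b_q := buffered_full b_full buf.
have sg_q : buffer_sym b = cur_sym w q by apply/ffunP => i; rewrite ffunE b_q.
exists (t, fun i => q i + (i \in chi)); first by split=> //; apply: buffered_clear.
by apply: star1; rewrite /faa_step /= -sg_q; split=> //; exists chi.
Qed.

Lemma saa_of_faa_sound : saa_accepts saa_of_faa w -> faa_accepts M w.
Proof.
move=> [[[s0 b0] k0] [[[sf bf] kf] [p [x0_start [xf_final [run p_end]]]]]].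
move: x0_start xf_final; rewrite !inE /= => /andP [s0_start /eqP b0_empty].
move=> /andP [sf_final /eqP bf_end]; subst b0.
have [[s q] [/= -> buf] run'] :=
  star_simulation saa_of_faa_step_sound (x' := (s0, _)) run
    (conj erefl (buffered_empty _)).
exists s0, sf, q; do 3 split=> //; move=> i.
have [p_i _] := buf i; move: p_i.
by rewrite p_end bf_end ffunE size_padded addn1 => -[].
Qed.

Lemma fill_one_step s b k j q p : buffered q b p -> b k = None -> q k <= sz k ->
  star (saa_step saa_of_faa w) (((s, b), j), p)
    (((s, fill_buffer k (cur_sym w q k) b), k), advance p k).
Proof.
move=> buf b_k q_k; apply: (@star_step _ _ _ (((s, b), k), p)).
  by left; split=> //; rewrite inE eqxx.
apply: star1; right; exists (cur_sym w q k); rewrite /= inE b_k !eqxx.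
by have [-> _] := buf k; rewrite b_k addn0 onth_padded q_k cur_symE.
Qed.

Lemma fill_buffers s b j q p : buffered q b p -> (forall i, q i <= sz i) ->
  exists b' p' j', [/\ forall i, b' i = Some (cur_sym w q i), buffered q b' p' &
    star (saa_step saa_of_faa w) (((s, b), j), p) (((s, b'), j'), p')].
Proof.
have [m] := ubnP #|[set i | b i == None]|.
elim: m b j p => // m IH b j p n_empty buf q_sz.
case: (pickP (fun i => b i == None)) => [k /eqP b_k|full]; last first.
  exists b, p, j; split=> //; last by apply: star_refl.
  by apply: buffered_full buf; apply/forallP => i; rewrite full.
set b1 := fill_buffer k (cur_sym w q k) b.
have n_empty1 : #|[set i | b1 i == None]| < m.
  have -> : [set i | b1 i == None] = [set i | b i == None] :\ k.
    by apply/setP => i; rewrite !inE ffunE; case: (eqVneq i k).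
  by move: n_empty; rewrite (cardsD1 k) inE b_k eqxx; lia.
have [b' [p' [j' [b'_q buf' run]]]] :=
  IH b1 k (advance p k) n_empty1 (buffered_fill buf b_k) q_sz.
exists b', p', j'; split=> //.
exact: star_trans (fill_one_step s j buf b_k (q_sz k)) run.
Qed.

Hypothesis M_wf : faa_wf M.

Lemma saa_of_faa_step_complete x y x' :
  x'.1.1.1 = x.1 /\ (forall i, x.2 i <= sz i) /\ buffered x.2 x'.1.1.2 x'.2 ->
  faa_step M w x y ->
  exists2 y', y'.1.1.1 = y.1 /\ (forall i, y.2 i <= sz i) /\ buffered y.2 y'.1.1.2 y'.2
    & star (saa_step saa_of_faa w) x' y'.
Proof.
case: x => [s q]; case: y => [t q']; case: x' => [[[s' b] j] p] /= [-> [q_sz buf]].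
move=> [nd [chi [chi_in [t_next /= ->]]]].
have [b' [p' [j' [b'_q buf' run]]]] := fill_buffers s j buf q_sz.
have chi_letters i : i \in chi -> q i < sz i.
  move=> i_chi; case sg_i: (cur_sym w q i) => [a|]; first exact: cur_sym_letter sg_i.
  have [_ /(_ i sg_i) no_dollar] := M_wf s nd.
  by move: (no_dollar (ltac:(by apply/set0Pn; exists t)) chi chi_in); rewrite i_chi.
exists (((t, clear_buffer chi b'), j'), p').
  split=> //; split; last exact: buffered_clear.
  move=> i; case: (boolP (i \in chi)) => [i_chi|i_chi].
    by rewrite addn1; apply: chi_letters.
  by rewrite addn0.
have sg_q : buffer_sym b' = cur_sym w q by apply/ffunP => i; rewrite ffunE b'_q.
apply: star_trans run (star1 _); left; split=> //.
rewrite inE /= /simulate_step /= sg_q nd; apply/orP; right; apply/and3P; split=> //.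
  by apply/forallP => i; rewrite b'_q.
by apply/exists_inP; exists chi; rewrite // t_next eqxx.
Qed.

Hypothesis n_gt0 : 0 < n.

Lemma saa_of_faa_complete : faa_accepts M w -> saa_accepts saa_of_faa w.
Proof.
move=> [s0 [sf [q [s0_start [sf_final [run q_end]]]]]].
pose x0 : (S * buffer) * 'I_n := ((s0, [ffun _ => None]), Ordinal n_gt0).
have [[[[s b] j] p] [/= s_sf [q_sz buf]] run'] :=
  star_simulation saa_of_faa_step_complete (x' := (x0, _)) run
    (conj erefl (conj (fun _ => leq0n _) (buffered_empty _))).
subst s; have [b' [p' [j' [b'_q buf' run'']]]] := fill_buffers sf j buf q_sz.
exists x0, ((sf, b'), j'), p'; rewrite !inE /= s0_start sf_final !eqxx.
split=> //; split.
  by apply/eqP/ffunP => i; rewrite b'_q !ffunE q_end onth_default.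
split; first exact: star_trans run' run''.
by move=> i; have [-> _] := buf' i; rewrite b'_q size_padded q_end addn1.
Qed.

Lemma saa_of_faa_accepts : saa_accepts saa_of_faa w <-> faa_accepts M w.
Proof. by split; [apply: saa_of_faa_sound | apply: saa_of_faa_complete]. Qed.

End FAAtoSAA.

Theorem mainTheorem7 (A : finType) (n : nat) (hn : 0 < n)
    (L : ('I_n -> seq A) -> Prop) :
  ((exists (S : finType) (M : faa A n S),
       faa_wf M /\ forall w, faa_accepts M w <-> L w) <->
   (exists (S : finType) (M : faa A n S),
       dfaa_wf M /\ forall w, faa_accepts M w <-> L w)) /\
  ((exists (S : finType) (M : faa A n S),
       faa_wf M /\ forall w, faa_accepts M w <-> L w) <->
   (exists (S : finType) (M : saa A n S),
       forall w, saa_accepts M w <-> L w)).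
Proof.
split; split.
- move=> [S [M [M_wf M_L]]]; eexists; exists (det_faa M).
  by split=> [|w]; [apply: det_faa_wf | rewrite det_faa_accepts].
- by move=> [S [M [[M_wf _] M_L]]]; exists S, M.
- move=> [S [M [M_wf M_L]]]; eexists; exists (saa_of_faa M) => w.
  by rewrite saa_of_faa_accepts.
- move=> [S [M M_L]]; eexists; exists (faa_of_saa M).
  by split=> [|w]; [apply: faa_of_saa_wf | rewrite faa_of_saa_accepts].
Qed.
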